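(* Let $\mathcal{T}_1=(V,\mathsf{p}_1)$ and $\mathcal{T}_2=(V,\mathsf{p}_2)$ be directed forests such that $\mathcal{T}_1$ is thinner than $\mathcal{T}_2$. Then: (a) $\mathrm{Chi}^{\langle k\rangle}_{\mathcal{T}_1}(v)\subseteq\mathrm{Chi}^{\langle k\rangle}_{\mathcal{T}_2}(v)$ for all $v\in V$ and $k\in\mathbb{N}$; (b) $\mathrm{root}(\mathcal{T}_1)\supseteq\mathrm{root}(\mathcal{T}_2)$; (c) every tree in $\mathcal{T}_1$ is contained in some tree in $\mathcal{T}_2$; in particular, the number of trees in $\mathcal{T}_2$ is less than or equal to the number of trees in $\mathcal{T}_1$; (d) every tree in $\mathcal{T}_2$ contains exactly one tree of $\mathcal{T}_1$ if and only if $\mathcal{T}_1=\mathcal{T}_2$; in particular, a directed forest strictly thinner than a directed tree is never a directed tree.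
   Context: A directed forest is a pair $\mathcal{T}=(V,\mathsf{p})$ where $V$ is a nonempty set and $\mathsf{p}\colon V\to V$ satisfies: if $n\in\mathbb{N}$, $v\in V$ and $\mathsf{p}^n(v)=v$, then $\mathsf{p}(v)=v$. Roots: $\mathrm{root}(\mathcal{T})=\{v:\mathsf{p}(v)=v\}$. For $k\in\mathbb{N}$, the $k$-th children of $v$ are $\mathrm{Chi}^{\langle k\rangle}_{\mathcal{T}}(v)=\{u\in V:\mathsf{p}^k(u)=v\neq\mathsf{p}^{k-1}(u)\}$ (with $\mathsf{p}^0=\mathrm{id}_V$). The trees of $\mathcal{T}$ are the connected components of the graph on $V$ with edges $\{\mathsf{p}(u),u\}$ for $u\notin\mathrm{root}(\mathcal{T})$ (equivalently, classes of $u\sim w$ iff $\mathsf{p}^m(u)=\mathsf{p}^n(w)$ for some $m,n\ge0$); a directed tree is a directed forest with exactly one tree. $\mathcal{T}_1$ is thinner than $\mathcal{T}_2$ if $\mathsf{p}_1(v)\in\{v,\mathsf{p}_2(v)\}$ for all $v\in V$; ''strictly thinner'' means thinner and different. *)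

From mathcomp Require Import all_boot.
From mathcomp Require Import boolp classical_sets functions cardinality.
Set Implicit Arguments. Unset Strict Implicit. Unset Printing Implicit Defensive.
Local Open Scope classical_set_scope.

(* Here ℕ = {1,2,...}: the paper's condition with n = 0 would be vacuous-breaking. *)
Definition directed_forest (V : Type) (p : V -> V) : Prop :=
  inhabited V /\ (forall (n : nat) (v : V), (0 < n)%N -> iter n p v = v -> p v = v).

Definition root_of (V : Type) (p : V -> V) : set V := [set v | p v = v].

Definition Chi (V : Type) (p : V -> V) (k : nat) (v : V) : set V :=
  [set u | iter k p u = v /\ v <> iter k.-1 p u].

Definition same_tree (V : Type) (p : V -> V) (u w : V) : Prop :=
  exists m n : nat, iter m p u = iter n p w.

Definition trees (V : Type) (p : V -> V) : set (set V) :=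
  [set A | exists v : V, A = [set u | same_tree p v u]].

Definition directed_tree (V : Type) (p : V -> V) : Prop :=
  directed_forest p /\ exists! A : set V, trees p A.

Definition thinner (V : Type) (p1 p2 : V -> V) : Prop :=
  forall v : V, p1 v = v \/ p1 v = p2 v.

From mathcomp Require Import all_boot.
From mathcomp Require Import boolp classical_sets functions cardinality.
Local Open Scope classical_set_scope.

(* Each p1-step is either a p2-step or a halt, so iterating p1 from a vertex
   stays on its p2-path and agrees with iterating p2 until it halts.  Hence
   p1-trees refine p2-trees and k-th children are preserved.  If p1 <> p2, pick v with p1 v = v <> p2 v: then v and p2 v lie
   in different p1-trees, since otherwise v would lie on a p2-cycle through
   p2 v and would be a p2-root; so the p2-tree of v contains two p1-trees. *)

Definition tree_of {V : Type} (p : V -> V) (v : V) : set V :=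
  [set u | same_tree p v u].

Section SameTree.
Local Set Implicit Arguments.
Local Unset Strict Implicit.
Variables (V : Type) (p : V -> V).

Lemma same_tree_refl u : same_tree p u u.
Proof. by exists 0, 0. Qed.

Lemma same_tree_sym u w : same_tree p u w -> same_tree p w u.
Proof. by move=> [m [n e]]; exists n, m. Qed.

Lemma same_tree_trans u v w :
  same_tree p u v -> same_tree p v w -> same_tree p u w.
Proof.
move=> [a [b e1]] [c [d e2]]; exists (c + a), (b + d).
by rewrite !iterD e1 -e2 -!iterD addnC.
Qed.

Lemma same_tree_step v : same_tree p v (p v).
Proof. by exists 1, 0. Qed.

Lemma tree_of_eq v w : same_tree p v w -> tree_of p v = tree_of p w.
Proof.
move=> vw; apply/seteqP; split=> u /= h.
  exact: same_tree_trans (same_tree_sym vw) h.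
exact: same_tree_trans vw h.
Qed.

Lemma tree_of_inj v w : tree_of p v = tree_of p w -> same_tree p v w.
Proof. by move=> E; have : tree_of p w w := same_tree_refl w; rewrite -E. Qed.

Lemma trees_tree_of v : trees p (tree_of p v).
Proof. by exists v. Qed.

Lemma trees_unique_subtree B :
  trees p B -> exists! A, trees p A /\ A `<=` B.
Proof.
move=> [v ->]; exists (tree_of p v); split; first by split; [exists v|].
move=> _ [[w ->] sub]; apply: tree_of_eq.
exact/sub/same_tree_refl.
Qed.

Lemma iter_fixed_after u j n :
  (j <= n)%N -> p (iter j p u) = iter j p u -> iter n p u = iter j p u.
Proof. by move=> /subnK <- fx; rewrite iterD iter_fix. Qed.

End SameTree.

Section Thinner.
Local Set Implicit Arguments.
Local Unset Strict Implicit.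
Variables (V : Type) (p1 p2 : V -> V).
Hypothesis thin : thinner p1 p2.

Lemma thinner_iter m x : exists j, iter m p1 x = iter j p2 x.
Proof.
elim: m => [|m [j e]]; first by exists 0.
rewrite iterS e; case: (thin (iter j p2 x)) => ->; first by exists j.
by exists j.+1.
Qed.

Lemma thinner_same_tree u w : same_tree p1 u w -> same_tree p2 u w.
Proof.
move=> [m [n e]].
have [a ea] := thinner_iter m u; have [b eb] := thinner_iter n w.
by exists a, b; rewrite -ea -eb.
Qed.

Lemma thinner_tree_of v : tree_of p1 v `<=` tree_of p2 v.
Proof. by move=> u; apply: thinner_same_tree. Qed.

Lemma thinner_root : root_of p2 `<=` root_of p1.
Proof. by move=> v; rewrite /root_of /= => p2v; case: (thin v) => ->. Qed.

Lemma thinner_iter_unfixed u k :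
  (forall j, (j < k)%N -> p1 (iter j p1 u) <> iter j p1 u) ->
  iter k p1 u = iter k p2 u.
Proof.
elim: k => [|k IH] // unfixed.
have IHk : iter k p1 u = iter k p2 u by apply: IH => j /ltnW; apply: unfixed.
rewrite !iterS IHk; case: (thin (iter k p2 u)) => // fx.
by case: (unfixed k (ltnSn k)); rewrite IHk.
Qed.

Lemma thinner_Chi v k : (0 < k)%N -> Chi p1 k v `<=` Chi p2 k v.
Proof.
move=> k_gt0 u [uv vu].
have unfixed j : (j < k)%N -> p1 (iter j p1 u) <> iter j p1 u.
  move=> jk fx; apply: vu.
  have jk' : (j <= k.-1)%N by rewrite -ltnS prednK.
  by rewrite -uv (iter_fixed_after (ltnW jk) fx) (iter_fixed_after jk' fx).
have agree n : (n <= k)%N -> iter n p1 u = iter n p2 u.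
  by move=> nk; apply: thinner_iter_unfixed => j jn; apply/unfixed/(leq_trans jn nk).
by split; rewrite -agree ?leq_pred.
Qed.

Lemma thinner_trees A : trees p1 A -> exists2 B, trees p2 B & A `<=` B.
Proof. by move=> [v ->]; exists (tree_of p2 v); [exists v | apply: thinner_tree_of]. Qed.

Lemma bigcup_thinner_tree_of v :
  \bigcup_(a in tree_of p1 v) tree_of p2 a = tree_of p2 v.
Proof.
apply/seteqP; split=> [u [a va au]|u vu]; last by exists v => //; apply: same_tree_refl.
by rewrite (tree_of_eq (thinner_same_tree va)).
Qed.

Lemma thinner_card_trees : (trees p2 #<= trees p1)%card.
Proof.
apply: card_le_trans (card_image_le (fun A => \bigcup_(a in A) tree_of p2 a) _).
apply: subset_card_le => _ [v ->]; exists (tree_of p1 v); first exact: trees_tree_of.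
exact: bigcup_thinner_tree_of.
Qed.

Hypothesis forest2 : directed_forest p2.

Lemma thinner_split_tree v : p1 v <> p2 v -> ~ same_tree p1 v (p2 v).
Proof.
have [p1v|->] := thin v => // p2v [m [n e]].
have [j ej] := thinner_iter n (p2 v).
have cyc : iter j.+1 p2 v = v by rewrite iterSr -ej -e iter_fix.
by apply: p2v; rewrite p1v; apply/esym/(forest2.2 j.+1).
Qed.

Lemma thinner_neq_two_trees :
  p1 <> p2 -> exists v, tree_of p1 v <> tree_of p1 (p2 v).
Proof.
move=> neq12; have [v neq] : exists v, p1 v <> p2 v.
  by apply/existsNP => eq12; apply/neq12/funext.
by exists v => E; apply/(thinner_split_tree neq)/tree_of_inj.
Qed.

Lemma thinner_unique_subtree_eq :
  (forall B, trees p2 B -> exists! A, trees p1 A /\ A `<=` B) -> p1 = p2.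
Proof.
move=> uniq; apply: contrapT => /thinner_neq_two_trees [v]; apply.
have [A [_ uA]] := uniq _ (trees_tree_of p2 v).
rewrite -(uA (tree_of p1 v)); last by split; [exact: trees_tree_of | exact: thinner_tree_of].
apply: uA; split; first exact: trees_tree_of.
by rewrite (tree_of_eq (same_tree_step p2 v)); apply: thinner_tree_of.
Qed.

Lemma thinner_not_tree : p1 <> p2 -> ~ directed_tree p1.
Proof.
move=> /thinner_neq_two_trees [v neq] [_ [A [_ uA]]]; apply: neq.
by rewrite -(uA _ (trees_tree_of p1 v)) (uA _ (trees_tree_of p1 (p2 v))).
Qed.

End Thinner.

Theorem lemma3p6 (V : Type) (p1 p2 : V -> V) :
  directed_forest p1 -> directed_forest p2 -> thinner p1 p2 ->
  (* (a) *)
  (forall (v : V) (k : nat), (0 < k)%N -> Chi p1 k v `<=` Chi p2 k v) /\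
  (* (b) *)
  (root_of p2 `<=` root_of p1) /\
  (* (c) *)
  ((forall A, trees p1 A -> exists2 B, trees p2 B & A `<=` B) /\
   (trees p2 #<= trees p1)%card) /\
  (* (d) *)
  (((forall B, trees p2 B -> exists! A, trees p1 A /\ A `<=` B) <-> p1 = p2) /\
   (directed_tree p2 -> p1 <> p2 -> ~ directed_tree p1)).
Proof.
move=> _ forest2 thin.
split; first exact: thinner_Chi.
split; first exact: thinner_root.
split; first by split; [exact: thinner_trees | exact: thinner_card_trees].
split; last by move=> _; apply: thinner_not_tree.
split; first exact: thinner_unique_subtree_eq.
by move=> <-; apply: trees_unique_subtree.
Qed.
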